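(* Let $n\ge 2$, $k\ge 2$ and let $G=W(n,k)$ be the windmill graph. Then for every integer $r\ge 2$, $\varphi(G^r)=\frac{1}{2}k(n-1)\bigl(k(n-1)-1\bigr)$.
   Context: All graphs are finite, simple and without isolated vertices. $\mathbb{N}_0$ denotes the set of non-negative integers; for finite $A,B\subseteq\mathbb{N}_0$, $A+B=\{a+b: a\in A, b\in B\}$. An integer additive set-indexer (IASI) of a graph $G$ is an injective map $f$ from $V(G)$ to the finite non-empty subsets of $\mathbb{N}_0$ such that the induced edge map $f^+(uv)=f(u)+f(v)$ is injective on $E(G)$. A weak IASI (WIASI) is an IASI $f$ with $|f^+(uv)|=\max(|f(u)|,|f(v)|)$ for every edge $uv$ (equivalently, for every edge at least one end vertex has a singleton label). A vertex or edge is mono-indexed if its set-label has cardinality $1$. Every graph admits a WIASI. The sparing number $\varphi(G)$ is the minimum, over all WIASIs of $G$, of the number of mono-indexed edges of $G$. The $r$-th power $G^r$ has vertex set $V(G)$, two distinct vertices being adjacent iff their distance in $G$ is at most $r$. The windmill graph $W(n,k)$ is obtained from $k$ copies of the complete graph $K_n$ by identifying one vertex from each copy into a single shared vertex. *)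

From mathcomp Require Import all_boot.
Set Implicit Arguments. Unset Strict Implicit. Unset Printing Implicit Defensive.

(* A finite subset of N_0 is represented canonically as a strictly
   increasing sequence of naturals. *)
Definition is_natset (s : seq nat) : bool := sorted ltn s.

Definition sumset (A B : seq nat) : seq nat :=
  sort leq (undup [seq a + b | a <- A, b <- B]).

Definition simple_graph (T : finType) (e : rel T) : Prop :=
  symmetric e /\ irreflexive e.

Definition edges (T : finType) (e : rel T) : {set {set T}} :=
  [set E : {set T} | [exists u, exists v, e u v && (E == [set u; v])]].

Definition IASI (T : finType) (e : rel T) (f : T -> seq nat) : Prop :=
  (forall v, is_natset (f v) /\ f v != [::]) /\
  injective f /\
  (forall u v u' v', e u v -> e u' v' ->
     sumset (f u) (f v) = sumset (f u') (f v') ->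
     [set u; v] = [set u'; v']).

Definition WIASI (T : finType) (e : rel T) (f : T -> seq nat) : Prop :=
  IASI e f /\
  (forall u v, e u v -> size (sumset (f u) (f v)) = maxn (size (f u)) (size (f v))).

Definition mono_edges (T : finType) (e : rel T) (f : T -> seq nat) : nat :=
  #|[set E in edges e | [exists u, exists v,
        [&& e u v, E == [set u; v] & size (sumset (f u) (f v)) == 1]]]|.

Definition is_sparing_number (T : finType) (e : rel T) (c : nat) : Prop :=
  (exists f, WIASI e f /\ mono_edges e f = c) /\
  (forall f, WIASI e f -> c <= mono_edges e f).

(* r-th power: distinct vertices at distance at most r, i.e. joined by a
   walk with at most r edges. *)
Definition gpow (T : finType) (e : rel T) (r : nat) : rel T :=
  fun x y => (x != y) &&
    [exists m : 'I_r.+1, exists t : m.-tuple T, path e x t && (last x t == y)].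

(* Windmill graph W(n,k): k copies of K_n sharing one vertex.  The shared
   vertex is None; Some (i, a) is the a-th non-shared vertex of copy i. *)
Definition windmill_vertex (n k : nat) : finType := option ('I_k * 'I_n.-1).

Definition windmill (n k : nat) : rel (windmill_vertex n k) :=
  fun x y => match x, y with
  | None, None => false
  | None, Some _ => true
  | Some _, None => true
  | Some (i, a), Some (j, b) => (i == j) && (a != b)
  end.
Arguments windmill n k : clear implicits.

From mathcomp Require Import all_boot.
From mathcomp Require Import zify.
Set Implicit Arguments. Unset Strict Implicit. Unset Printing Implicit Defensive.

(* In a weak IASI every edge has a mono-indexed end, because two sets with at
   least two elements each have a sumset larger than either.  In a complete graph
   on m vertices at most one vertex is therefore not mono-indexed, and every edge
   between two mono-indexed vertices is mono-indexed: there are at least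
   C(m-1, 2) such edges.  The bound is attained by labelling each vertex x with
   {2^i(x)}, for an injective i, except a hub w0 labelled {2^i(w0), 2^i(w0)+1}:
   the least element of an edge label is a sum of two distinct powers of two,
   which determines the edge.  Finally W(n,k) has diameter 2, so its r-th power
   (r >= 2) is the complete graph on k(n-1)+1 vertices. *)

Lemma sumsetP A B x :
  reflect (exists a b, [/\ a \in A, b \in B & x = a + b]) (x \in sumset A B).
Proof.
rewrite /sumset mem_sort mem_undup.
apply: (iffP allpairsP) => [[[a b] /= [ha hb ->]]|[a [b [ha hb ->]]]].
  by exists a, b.
by exists (a, b).
Qed.

Lemma mem_sumset A B a b : a \in A -> b \in B -> a + b \in sumset A B.
Proof. by move=> ha hb; apply/sumsetP; exists a, b. Qed.

Lemma sumsetC A B : sumset A B = sumset B A.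
Proof.
apply/(perm_sortP leq_total leq_trans anti_leq).
apply: uniq_perm; rewrite ?undup_uniq // => x; rewrite !mem_undup.
apply/allpairsP/allpairsP => -[[a b] /= [ha hb ->]]; exists (b, a); by rewrite addnC.
Qed.

Lemma size_sumset1l a B : uniq B -> size (sumset [:: a] B) = size B.
Proof.
move=> uB; rewrite size_sort /= cats0 undup_id ?size_map //.
by rewrite (map_inj_uniq (@addnI a)).
Qed.

Lemma size_sumset1r A b : uniq A -> size (sumset A [:: b]) = size A.
Proof. by rewrite sumsetC; apply: size_sumset1l. Qed.

Lemma natset_uniq A : is_natset A -> uniq A.
Proof. by apply: sorted_uniq; [exact: ltn_trans | exact: ltnn]. Qed.

Lemma bigmax_seq_mem (B : seq nat) : B != [::] -> \max_(b <- B) b \in B.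
Proof.
elim: B => // x [|y B] IH _; first by rewrite big_seq1 mem_seq1.
by rewrite big_cons inE /maxn; case: ltnP; rewrite ?IH ?eqxx ?orbT.
Qed.

(* The translates [a0 + B] and the extra point [a1 + max B] all lie in [A + B]. *)
Lemma size_sumset_gt A B a0 a1 : uniq B -> B != [::] ->
  a0 \in A -> a1 \in A -> a0 < a1 -> size B < size (sumset A B).
Proof.
move=> uB nB h0 h1 lt01; set m := \max_(b <- B) b.
have le_m b : b \in B -> b <= m by move=> hb; exact: leq_bigmax_seq.
have := @uniq_leq_size _ (rcons [seq a0 + b | b <- B] (a1 + m)) (sumset A B).
rewrite size_rcons size_map; apply; last first.
  move=> x; rewrite mem_rcons inE => /predU1P[->|/mapP[b hb ->]].
    exact/mem_sumset/bigmax_seq_mem.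
  exact: mem_sumset.
rewrite rcons_uniq (map_inj_uniq (@addnI a0)) uB andbT.
by apply/mapP => -[b /le_m hb]; lia.
Qed.

Lemma size_sumset_gt_max A B : is_natset A -> is_natset B ->
  1 < size A -> 1 < size B -> maxn (size A) (size B) < size (sumset A B).
Proof.
wlog le_AB : A B / size A <= size B => [hwlog|].
  move=> nA nB sA sB; case/orP: (leq_total (size A) (size B)) => h.
    exact: hwlog.
  by rewrite maxnC sumsetC hwlog.
rewrite (maxn_idPr le_AB).
case: A le_AB => [|a0 [|a1 A]] //= _ /andP[lt01 _] nB _ sB.
apply: (size_sumset_gt (a0 := a0) (a1 := a1)); rewrite ?inE ?eqxx ?orbT //.
  exact: natset_uniq.
by case: B sB {nB}.
Qed.

Definition complete_graph (T : finType) (e : rel T) : Prop :=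
  forall u v, e u v = (u != v).

Definition mono_vertices (T : finType) (f : T -> seq nat) : {set T} :=
  [set x | size (f x) == 1].

Section WeakIASI.

Variables (T : finType) (e : rel T) (f : T -> seq nat).
Hypothesis wiasi_f : WIASI e f.

Lemma wiasi_size_gt0 x : 0 < size (f x).
Proof. by have [[/(_ x)[_]]] := wiasi_f; case: (f x). Qed.

Lemma wiasi_mono_end u v : e u v -> (size (f u) == 1) || (size (f v) == 1).
Proof.
move=> euv; have [[natf _] sizef] := wiasi_f.
apply/contraT; rewrite negb_or => /andP[su sv].
have gt1 x : size (f x) != 1 -> 1 < size (f x).
  by move=> sx; rewrite ltn_neqAle eq_sym sx wiasi_size_gt0.
have := size_sumset_gt_max (natf u).1 (natf v).1 (gt1 _ su) (gt1 _ sv).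
by rewrite sizef // ltnn.
Qed.

Lemma wiasi_mono_edge u v : e u v ->
  (size (sumset (f u) (f v)) == 1) = (size (f u) == 1) && (size (f v) == 1).
Proof.
move=> euv; rewrite wiasi_f.2 //.
by have := wiasi_size_gt0 u; have := wiasi_size_gt0 v; lia.
Qed.

Hypothesis complete_e : complete_graph e.

Lemma mono_edges_complete : mono_edges e f = 'C(#|mono_vertices f|, 2).
Proof.
rewrite -cards_draws /mono_edges; apply: eq_card => E; rewrite !inE.
apply/idP/idP.
  case/andP => _ /existsP[u /existsP[v /and3P[euv /eqP-> mono_uv]]].
  rewrite wiasi_mono_edge // in mono_uv; case/andP: mono_uv => mu mv.
  by rewrite subUset !sub1set !inE mu mv cards2 -complete_e euv.
case/andP => sub_E /cards2P[u [v [uv E_uv]]]; subst E.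
move: sub_E; rewrite subUset !sub1set !inE => /andP[mu mv].
have euv : e u v by rewrite complete_e.
apply/andP; split; apply/existsP; exists u; apply/existsP; exists v.
  by rewrite euv eqxx.
by rewrite euv eqxx wiasi_mono_edge // mu mv.
Qed.

Lemma card_mono_vertices_complete : #|T|.-1 <= #|mono_vertices f|.
Proof.
have : #|~: mono_vertices f| <= 1.
  apply/card_le1_eqP => x y; rewrite !inE => mx my.
  apply/eqP; rewrite eq_sym -[x == y]negbK -complete_e.
  by apply: contra (@wiasi_mono_end x y) _; rewrite negb_or mx my.
by have := cardsC (mono_vertices f); lia.
Qed.

End WeakIASI.

Lemma expn2_sum_log a b : a < b -> trunc_log 2 (2 ^ a + 2 ^ b) = b.
Proof.
move=> lt_ab; apply: trunc_log_eq => //.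
by rewrite leq_addl expnS mul2n -addnn ltn_add2r ltn_exp2l.
Qed.

Lemma expn2_sum_inj a b c d : a < b -> c < d -> 2 ^ a + 2 ^ b = 2 ^ c + 2 ^ d ->
  a = c /\ b = d.
Proof.
move=> lt_ab lt_cd E.
have bd : b = d by rewrite -(expn2_sum_log lt_ab) -(expn2_sum_log lt_cd) E.
by subst d; split=> //; apply: (@expnI 2) => //; exact: addIn E.
Qed.

Lemma expn2_pair_sum_inj a b c d : a != b -> c != d ->
  2 ^ a + 2 ^ b = 2 ^ c + 2 ^ d -> (a = c /\ b = d) \/ (a = d /\ b = c).
Proof.
move=> /[swap]; case: (ltngtP c d) => // lt_cd _.
  case: (ltngtP a b) => // lt_ab _ E; first by left; apply: expn2_sum_inj E.
  by right; rewrite addnC in E; have [] := expn2_sum_inj lt_ab lt_cd E.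
case: (ltngtP a b) => // lt_ab _; rewrite [RHS]addnC => E.
  by right; have [] := expn2_sum_inj lt_ab lt_cd E.
by left; rewrite addnC in E; have [] := expn2_sum_inj lt_ab lt_cd E.
Qed.

Section SidonLabel.

Variables (T : finType) (w0 : T).

Definition pow2_rank (x : T) : nat := 2 ^ enum_rank x.

Lemma pow2_rank_inj : injective pow2_rank.
Proof. by move=> x y /(expnI (isT : 1 < 2))/val_inj/enum_rank_inj. Qed.

Lemma pow2_rank_pair_inj u v u' v' : u != v -> u' != v' ->
  pow2_rank u + pow2_rank v = pow2_rank u' + pow2_rank v' ->
  [set u; v] = [set u'; v'].
Proof.
have rank_neq x y : x != y -> (enum_rank x : nat) != enum_rank y.
  by rewrite (inj_eq val_inj) (inj_eq enum_rank_inj).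
have rank_inj x y : (enum_rank x : nat) = enum_rank y -> x = y.
  by move/val_inj/enum_rank_inj.
move=> /rank_neq uv /rank_neq uv' /(expn2_pair_sum_inj uv uv').
by case=> -[/rank_inj-> /rank_inj->]; rewrite // setUC.
Qed.

(* [pow2_rank u + pow2_rank v] is the least element of the label of the edge
   [uv], so distinct edges get distinct labels. *)
Definition sidon_label (x : T) : seq nat :=
  if x == w0 then [:: pow2_rank x; (pow2_rank x).+1] else [:: pow2_rank x].

Lemma size_sidon_label x : size (sidon_label x) = (x == w0).+1.
Proof. by rewrite /sidon_label; case: eqP. Qed.

Lemma mem_sidon_label x : pow2_rank x \in sidon_label x.
Proof. by rewrite /sidon_label; case: eqP; rewrite inE eqxx. Qed.

Lemma sidon_label_ge x a : a \in sidon_label x -> pow2_rank x <= a.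
Proof.
by rewrite /sidon_label; case: eqP => _; rewrite !inE; [case/orP|] => /eqP->.
Qed.

Lemma sidon_label_sumset_ge u v z : z \in sumset (sidon_label u) (sidon_label v) ->
  pow2_rank u + pow2_rank v <= z.
Proof.
by case/sumsetP=> a [b [/sidon_label_ge ha /sidon_label_ge hb ->]]; exact: leq_add.
Qed.

Lemma mono_vertices_sidon_label : mono_vertices sidon_label = [set~ w0].
Proof. by apply/setP => x; rewrite !inE size_sidon_label eqSS eqb0. Qed.

Lemma sidon_label_wiasi (e : rel T) : complete_graph e -> WIASI e sidon_label.
Proof.
move=> complete_e; have natset x : is_natset (sidon_label x).
  by rewrite /sidon_label; case: eqP => //= _; rewrite ltnSn.
split; [split; [|split] |].
- by move=> x; rewrite natset -size_eq0 size_sidon_label.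
- move=> x y /(congr1 (head 0)); rewrite /sidon_label.
  by do 2 case: eqP => _; apply: pow2_rank_inj.
- move=> u v u' v'; rewrite !complete_e => uv uv' E.
  have sum_mem x y :
      pow2_rank x + pow2_rank y \in sumset (sidon_label x) (sidon_label y).
    by apply: mem_sumset; exact: mem_sidon_label.
  apply: pow2_rank_pair_inj => //; apply/anti_leq/andP.
  by split; apply: sidon_label_sumset_ge; [rewrite E | rewrite -E].
move=> u v; rewrite complete_e => uv; rewrite !size_sidon_label.
have uniq_label x : uniq (sidon_label x) by exact/natset_uniq/natset.
case: (eqVneq u w0) => [uw0|uw0].
  have vw0 : v != w0 by rewrite -uw0 eq_sym.
  rewrite {2}/sidon_label (negbTE vw0) size_sumset1r //.
  by rewrite size_sidon_label uw0 eqxx.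
rewrite {1}/sidon_label (negbTE uw0) size_sumset1l //.
by rewrite size_sidon_label; case: (v == w0).
Qed.

End SidonLabel.

Theorem sparing_number_complete (T : finType) (e : rel T) :
  complete_graph e -> 0 < #|T| -> is_sparing_number e 'C(#|T|.-1, 2).
Proof.
move=> complete_e /card_gt0P[w0 _]; split.
  have wiasi_label := sidon_label_wiasi w0 complete_e.
  exists (sidon_label w0); split=> //.
  rewrite (mono_edges_complete wiasi_label complete_e).
  by rewrite mono_vertices_sidon_label cardsC1.
move=> f wiasi_f; rewrite (mono_edges_complete wiasi_f complete_e).
exact/leq_bin2l/(card_mono_vertices_complete wiasi_f complete_e).
Qed.

(* Any two vertices of a windmill are joined by a walk of length at most 2
   through the hub. *)
Lemma windmill_pow_complete n k r : 2 <= r -> complete_graph (gpow (windmill n k) r).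
Proof.
move=> le2r u v; rewrite /gpow; case: (eqVneq u v) => //= uv.
have lt1r : 1 < r.+1 by lia.
have lt2r : 2 < r.+1 by lia.
apply/existsP; case: u v uv => [p|] [q|] uv //.
- exists (Ordinal lt2r); apply/existsP; exists [tuple None; Some q].
  by rewrite /= eqxx; case: p {uv}.
- exists (Ordinal lt1r); apply/existsP; exists [tuple None].
  by rewrite /= eqxx; case: p {uv}.
- exists (Ordinal lt1r); apply/existsP; exists [tuple Some q].
  by rewrite /= eqxx.
Qed.

Lemma card_windmill_vertex n k : #|windmill_vertex n k| = (k * (n - 1)).+1.
Proof. by rewrite card_option card_prod !card_ord subn1. Qed.

Theorem mainTheorem8 (n k r : nat) (hn : 2 <= n) (hk : 2 <= k) (hr : 2 <= r) :
  is_sparing_number (gpow (windmill n k) r)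
    ((k * (n - 1) * (k * (n - 1) - 1)) %/ 2).
Proof.
have -> : (k * (n - 1) * (k * (n - 1) - 1)) %/ 2 = 'C(#|windmill_vertex n k|.-1, 2).
  by rewrite card_windmill_vertex bin2 divn2 !subn1.
apply: sparing_number_complete; first exact: windmill_pow_complete.
by rewrite card_windmill_vertex.
Qed.
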